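(* Let $K, T \geq 1$ be integers, let $r_{tk}$ ($t = 1,\ldots,T$, $k = 1,\ldots,K$) be real numbers (the return of security $k$ at time $t$), and let $H_1,\ldots,H_K > 0$ be thresholds. For each security $k$ and time $t$, classify the observation $r_{tk}$ as $U$ (up) if $r_{tk} \geq H_k$, as $D$ (down) if $r_{tk} \leq -H_k$, and as $N$ (neutral) if $-H_k < r_{tk} < H_k$. For $p,q \in \{U,N,D\}$ and securities $i,j$, let $n_{ij}^{pq}$ be the number of times $t \in \{1,\ldots,T\}$ at which $r_{ti}$ is in category $p$ and $r_{tj}$ is in category $q$. Assume that $n_{ij}^{NN} < T$ for all $i,j \in \{1,\ldots,K\}$. Define the $K \times K$ matrix $G^{(2)}$ with entries $$g_{ij}^{(2)} = \frac{n_{ij}^{UU} + n_{ij}^{DD} - n_{ij}^{UD} - n_{ij}^{DU}}{T - n_{ij}^{NN}}.$$ Then $G^{(2)}$ is positive semidefinite.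
   Context: In the paper the thresholds are $H_k = c\,\sigma_k$, where $c>0$ is a fixed fraction (e.g. $1/2$) and $\sigma_k$ is the sample standard deviation of the returns of security $k$; the result only uses that the thresholds are positive. The matrix $G^{(2)}$ is called Gerber Statistic 2. *)

From mathcomp Require Import all_boot all_order all_algebra.
From mathcomp Require Import reals.
Set Implicit Arguments. Unset Strict Implicit. Unset Printing Implicit Defensive.
Import Order.TTheory GRing.Theory Num.Theory.
Local Open Scope ring_scope.

Inductive cat := Up | Neutral | Down.

Definition cat_eqb (a b : cat) : bool :=
  match a, b with
  | Up, Up | Neutral, Neutral | Down, Down => true
  | _, _ => false end.

Section Gerber.
Variable R : realType.

Definition classify (h x : R) : cat :=
  if h <= x then Up else if x <= - h then Down else Neutral.

Definition ncount (T K : nat) (r : 'M[R]_(T, K)) (H : 'I_K -> R)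
    (p q : cat) (i j : 'I_K) : nat :=
  #|[set t : 'I_T | cat_eqb (classify (H i) (r t i)) p
                   && cat_eqb (classify (H j) (r t j)) q]|.

Definition gerber2 (T K : nat) (r : 'M[R]_(T, K)) (H : 'I_K -> R) : 'M[R]_K :=
  \matrix_(i, j)
    (((ncount r H Up Up i j)%:R + (ncount r H Down Down i j)%:R
      - (ncount r H Up Down i j)%:R - (ncount r H Down Up i j)%:R)
     / (T%:R - (ncount r H Neutral Neutral i j)%:R)).

End Gerber.

Definition psd (R : realType) (n : nat) (A : 'M[R]_n) : Prop :=
  A^T = A /\ forall x : 'cV[R]_n, 0 <= (x^T *m A *m x) ord0 ord0.

From mathcomp Require Import all_boot all_order all_fingroup all_algebra.
From mathcomp Require Import reals ring.
Set Implicit Arguments. Unset Strict Implicit. Unset Printing Implicit Defensive.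
Import Order.TTheory GRing.Theory Num.Theory.

(* Let A_i be the set of times at which security i is not neutral and
   s_ti in {1, 0, -1} the sign of its category, so that
   g_ij = (sum_t s_ti s_tj) / |A_i :|: A_j|.  For a uniformly random ordering
   of the times, t in A_i :&: A_j comes first in both A_i and A_j iff it comes
   first in A_i :|: A_j, which happens with probability 1 / |A_i :|: A_j|
   (the min-hash identity).  Hence G is the average over all orderings of the
   Gram matrices W^T W, where W t i = s_ti if t comes first in A_i and 0
   otherwise. *)

Lemma card_set_sum (T : finType) (P : pred T) : #|[set t | P t]| = (\sum_t P t)%N.
Proof. by rewrite -sum1dep_card big_mkcond; apply: eq_bigr => t _; case: (P t). Qed.

Section FirstUnderPermutation.
Variable n : nat.
Implicit Types (s : {perm 'I_n}) (A B S : {set 'I_n}).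

Definition perm_first s S (t : 'I_n) : bool :=
  (t \in S) && [forall u in S, (s t <= s u)%N].

Lemma perm_first_inj s S a b : perm_first s S a -> perm_first s S b -> a = b.
Proof.
case/andP=> aS /forall_inP le_a; case/andP=> bS /forall_inP le_b.
apply: (@perm_inj _ s); apply: val_inj; apply/eqP.
by rewrite eqn_leq le_a // le_b.
Qed.

Lemma perm_first_exists s S a : a \in S -> exists b, perm_first s S b.
Proof.
move=> aS; case: (arg_minnP (fun u => nat_of_ord (s u)) aS) => b bS le_b.
by exists b; apply/andP; split=> //; apply/forall_inP.
Qed.

Lemma sum_perm_first s S a : a \in S -> (\sum_(u in S) perm_first s S u = 1)%N.
Proof.
move=> aS; have [b first_b] := perm_first_exists s aS.
have bS : b \in S by case/andP: first_b.
rewrite (bigD1 b) //= first_b big1 // => u /andP[_ ub].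
by apply/eqP; rewrite eqb0; apply: contraNN ub => /perm_first_inj/(_ first_b)->.
Qed.

Definition first_perms S t := [set s | perm_first s S t].

(* Composing with the transposition (a b) maps the orderings in which a comes
   first into those in which b comes first. *)
Lemma card_first_perms_le S a b : a \in S -> b \in S ->
  (#|first_perms S a| <= #|first_perms S b|)%N.
Proof.
move=> aS bS; rewrite -(card_imset _ (mulgI (tperm a b))).
apply: subset_leq_card; apply/subsetP => x /imsetP[s].
rewrite !inE => /andP[_ /forall_inP le_a] ->{x}.
rewrite /perm_first bS; apply/forall_inP => u uS; rewrite !permM tpermR.
have [->|ua] := eqVneq u a; first by rewrite tpermL le_a.
have [->|ub] := eqVneq u b; first by rewrite tpermR.
by rewrite tpermD 1?eq_sym // le_a.
Qed.

Lemma card_first_perms S t : t \in S ->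
  (#|S| * #|first_perms S t| = #|{perm 'I_n}|)%N.
Proof.
move=> tS; transitivity (\sum_(u in S) #|first_perms S u|)%N.
  rewrite -sum_nat_const; apply: eq_bigr => u uS.
  by apply/eqP; rewrite eqn_leq !card_first_perms_le.
transitivity (\sum_s \sum_(u in S) perm_first s S u)%N.
  rewrite exchange_big; apply: eq_bigr => u _.
  by rewrite card_set_sum.
by rewrite (eq_bigr (fun _ => 1%N)) ?sum1_card // => s _; apply: sum_perm_first tS.
Qed.

Lemma perm_firstU s A B t : t \in A -> t \in B ->
  perm_first s (A :|: B) t = perm_first s A t && perm_first s B t.
Proof.
move=> tA tB; rewrite /perm_first in_setU tA tB /=.
apply/forall_inP/andP => [le_t|[/forall_inP le_tA /forall_inP le_tB]].
  by split; apply/forall_inP => u uS; apply: le_t; rewrite in_setU uS ?orbT.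
by move=> u; rewrite in_setU => /orP[]; [apply: le_tA | apply: le_tB].
Qed.

Lemma card_first_perms_setI A B t : t \in A -> t \in B ->
  (#|A :|: B| * #|[set s | perm_first s A t && perm_first s B t]|
   = #|{perm 'I_n}|)%N.
Proof.
move=> tA tB; rewrite -(@card_first_perms (A :|: B) t) ?in_setU ?tA //.
suff -> : [set s | perm_first s A t && perm_first s B t] = first_perms (A :|: B) t by [].
by apply/setP => s; rewrite !inE perm_firstU.
Qed.

End FirstUnderPermutation.

Local Open Scope ring_scope.

Section PositiveSemidefinite.
Variables (R : realType) (n : nat).
Implicit Types (A B : 'M[R]_n).

Lemma psd0 : psd (0 : 'M[R]_n).
Proof. by split; [rewrite trmx0 | move=> x; rewrite mulmx0 mul0mx mxE]. Qed.

Lemma psdD A B : psd A -> psd B -> psd (A + B).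
Proof.
move=> [symA formA] [symB formB]; split; first by rewrite linearD /= symA symB.
by move=> x; rewrite mulmxDr mulmxDl mxE addr_ge0.
Qed.

Lemma psd_sum (I : finType) (F : I -> 'M[R]_n) :
  (forall i, psd (F i)) -> psd (\sum_i F i).
Proof. by move=> psdF; apply: big_ind => //; [apply: psd0 | apply: psdD]. Qed.

Lemma psd_gram m (M : 'M[R]_(m, n)) : psd (M^T *m M).
Proof.
split; first by rewrite trmx_mul trmxK.
move=> x; rewrite mulmxA -trmx_mul -mulmxA mxE.
by apply: sumr_ge0 => i _; rewrite mxE -expr2 sqr_ge0.
Qed.

Lemma psdZ (c : R) A : 0 < c -> psd (c *: A) -> psd A.
Proof.
move=> c_gt0 [symcA formcA]; have c_neq0 : c != 0 by rewrite gt_eqF.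
split; first by apply: (scalerI c_neq0); rewrite -linearZ.
move=> x; have := formcA x; rewrite -scalemxAr -scalemxAl mxE.
by rewrite pmulr_rge0.
Qed.

End PositiveSemidefinite.

Section GerberGram.
Variables (R : realType) (T K : nat) (r : 'M[R]_(T, K)) (H : 'I_K -> R).

Definition cat_sign c : R :=
  match c with Up => 1 | Neutral => 0 | Down => -1 end.

Definition gsign (t : 'I_T) (i : 'I_K) : R := cat_sign (classify (H i) (r t i)).

Definition active (i : 'I_K) : {set 'I_T} :=
  [set t | ~~ cat_eqb (classify (H i) (r t i)) Neutral].

Lemma gsign_inactive t i : t \notin active i -> gsign t i = 0.
Proof. by rewrite inE negbK /gsign; case: classify. Qed.

Lemma cat_sign_mul c d :
  cat_sign c * cat_sign d =
    (cat_eqb c Up && cat_eqb d Up)%:R + (cat_eqb c Down && cat_eqb d Down)%:R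
    - (cat_eqb c Up && cat_eqb d Down)%:R - (cat_eqb c Down && cat_eqb d Up)%:R.
Proof.
by case: c; case: d; rewrite /= ?(mul1r, mulr1, mulr0, mul0r, mulrNN, subr0, addr0, add0r).
Qed.

Lemma card_activeU_ncount i j :
  (#|active i :|: active j| + ncount r H Neutral Neutral i j = T)%N.
Proof.
rewrite /ncount -[X in (_ = X)%N]card_ord -(cardsC (active i :|: active j)).
congr (_ + _)%N; apply: eq_card => t.
by rewrite !inE negb_or !negbK.
Qed.

Lemma gerber2E i j :
  gerber2 r H i j = (\sum_t gsign t i * gsign t j) / #|active i :|: active j|%:R.
Proof.
rewrite mxE; congr (_ / _).
  rewrite /ncount !card_set_sum !natr_sum -!big_split -!sumrB /=.
  by apply: eq_bigr => t _; rewrite /gsign cat_sign_mul.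
by rewrite -[X in X%:R - _](card_activeU_ncount i j) natrD addrK.
Qed.

Definition first_sign_mx (s : {perm 'I_T}) : 'M[R]_(T, K) :=
  \matrix_(t, i) ((perm_first s (active i) t)%:R * gsign t i).

Lemma sum_first_sign_mx t i j :
  \sum_s first_sign_mx s t i * first_sign_mx s t j
  = #|{perm 'I_T}|%:R * (gsign t i * gsign t j / #|active i :|: active j|%:R).
Proof.
under eq_bigr => s _ do rewrite !mxE mulrACA -natrM mulnb.
rewrite -mulr_suml -natr_sum -card_set_sum.
have [ti|/gsign_inactive->] := boolP (t \in active i); last by rewrite !(mul0r, mulr0).
have [tj|/gsign_inactive->] := boolP (t \in active j); last by rewrite !(mul0r, mulr0).
rewrite -(card_first_perms_setI ti tj) natrM.
have u_neq0 : #|active i :|: active j|%:R != 0 :> R.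
  by rewrite pnatr_eq0 -lt0n card_gt0; apply/set0Pn; exists t; rewrite in_setU ti.
by field.
Qed.

Lemma gerber2_gram :
  #|{perm 'I_T}|%:R *: gerber2 r H = \sum_s (first_sign_mx s)^T *m first_sign_mx s.
Proof.
apply/matrixP => i j; rewrite summxE mxE gerber2E mulr_suml mulr_sumr.
under [RHS]eq_bigr => s _ do rewrite mxE.
rewrite exchange_big; apply: eq_bigr => t _.
by rewrite -sum_first_sign_mx; apply: eq_bigr => s _; rewrite !mxE.
Qed.

End GerberGram.

Theorem proposition2 (R : realType) (K T : nat) (hK : (1 <= K)%N) (hT : (1 <= T)%N)
    (r : 'M[R]_(T, K)) (H : 'I_K -> R) (hH : forall k, 0 < H k)
    (hNN : forall i j : 'I_K, (ncount r H Neutral Neutral i j < T)%N) :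
  psd (gerber2 r H).
Proof.
have perms_gt0 : 0 < #|{perm 'I_T}|%:R :> R by rewrite ltr0n card_Sn fact_gt0.
apply: (psdZ perms_gt0); rewrite gerber2_gram.
by apply: psd_sum => s; apply: psd_gram.
Qed.
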